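(* Let $H$ be a separable $\omega_1$-collapsible topological group. Then every subspace of $H$ of cardinality at most $\omega_1$ is Lindel\''of.
   Context: All spaces are regular. A topological group $H$ is $\omega_1$-collapsible if for every closed normal subgroup $N$ of $H$, $\psi(H/N)\le\omega_1$ implies that $H/N$ is metrizable. Here $\psi(Z)=\sup_{z\in Z}\psi(Z,z)$, where $\psi(Z,z)$ is the least cardinality of a family $\mathcal U$ of open neighbourhoods of $z$ with $\bigcap\mathcal U=\{z\}$. *)

From HB Require Import structures.
From mathcomp Require Import all_boot all_order all_algebra.
From mathcomp Require Import all_classical all_reals all_analysis.
From Stdlib Require Import Rdefinitions.

Set Implicit Arguments.
Unset Strict Implicit.
Unset Printing Implicit Defensive.

Local Open Scope classical_set_scope.

(* |A| <= omega_1 iff A carries a well-ordering all of whose proper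
   initial segments are countable (its order type is then <= omega_1). *)
Definition card_le_omega1 (X : Type) (A : set X) : Prop :=
  exists r : X -> X -> Prop,
    (forall a, A a -> ~ r a a) /\
    (forall a b c, A a -> A b -> A c -> r a b -> r b c -> r a c) /\
    (forall a b, A a -> A b -> a = b \/ r a b \/ r b a) /\
    (forall B : set X, B `<=` A -> B !=set0 ->
        exists2 m, B m & forall b, B b -> ~ r b m) /\
    (forall a, A a -> countable [set b | A b /\ r b a]).

Definition topological_group (T : topologicalType)
  (mul : T -> T -> T) (inv : T -> T) (one : T) : Prop :=
  [/\ (forall x y z, mul x (mul y z) = mul (mul x y) z),
      (forall x, mul one x = x),
      (forall x, mul (inv x) x = one),
      continuous (fun p : T * T => mul p.1 p.2) &
      continuous inv].

Definition closed_normal_subgroup (T : topologicalType)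
  (mul : T -> T -> T) (inv : T -> T) (one : T) (N : set T) : Prop :=
  [/\ N one,
      (forall x y, N x -> N y -> N (mul x y)),
      (forall x, N x -> N (inv x)),
      (forall g n, N n -> N (mul (mul g n) (inv g))) &
      closed N].

Definition lcoset (T : Type) (mul : T -> T -> T) (g : T) (N : set T) : set T :=
  [set mul g n | n in N].

Definition coset_space (T : topologicalType) (mul : T -> T -> T) (N : set T)
  : Type := {A : set T | exists g, A = lcoset mul g N}.

HB.instance Definition _ (T : topologicalType) (mul : T -> T -> T) (N : set T) :=
  gen_eqMixin (coset_space mul N).
HB.instance Definition _ (T : topologicalType) (mul : T -> T -> T) (N : set T) :=
  gen_choiceMixin (coset_space mul N).

Definition coset_proj (T : topologicalType) (mul : T -> T -> T) (N : set T)
  (g : T) : coset_space mul N :=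
  exist _ (lcoset mul g N) (ex_intro _ g erefl).

Definition coset_open (T : topologicalType) (mul : T -> T -> T) (N : set T)
  (U : set (coset_space mul N)) : Prop :=
  open (coset_proj mul N @^-1` U).

Lemma coset_openT (T : topologicalType) (mul : T -> T -> T) (N : set T) :
  @coset_open T mul N setT.
Proof. by rewrite /coset_open preimage_setT; exact: openT. Qed.

Lemma coset_openI (T : topologicalType) (mul : T -> T -> T) (N : set T) :
  setI_closed (@coset_open T mul N).
Proof. by move=> A B oA oB; rewrite /coset_open preimage_setI; exact: openI. Qed.

Lemma coset_open_bigU (T : topologicalType) (mul : T -> T -> T) (N : set T)
  (I : Type) (f : I -> set (coset_space mul N)) :
  (forall i, @coset_open T mul N (f i)) -> @coset_open T mul N (\bigcup_i f i).
Proof.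
move=> ofi; rewrite /coset_open preimage_bigcup.
by apply: bigcup_open => i _; exact: ofi.
Qed.

HB.instance Definition _ (T : topologicalType) (mul : T -> T -> T) (N : set T) :=
  isOpenTopological.Build (coset_space mul N)
    (@coset_openT T mul N) (@coset_openI T mul N) (@coset_open_bigU T mul N).

Definition pseudocharacter_le_omega1 (Z : topologicalType) : Prop :=
  forall z : Z, exists F : set (set Z),
    [/\ card_le_omega1 F,
        (forall U, F U -> open U /\ U z) &
        \bigcap_(U in F) U = [set z]].

Definition metrizable (Z : topologicalType) : Prop :=
  exists d : Z -> Z -> R,
    [/\ (forall x y, (0 <= d x y)%R),
        (forall x y, d x y = 0%R <-> x = y),
        (forall x y, d x y = d y x),
        (forall x y z, (d x z <= d x y + d y z)%R) &
        (forall U : set Z, open U <->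
           forall x, U x -> exists2 e : R, (0 < e)%R &
             [set y | (d x y < e)%R] `<=` U)].

Definition omega1_collapsible (T : topologicalType)
  (mul : T -> T -> T) (inv : T -> T) (one : T) : Prop :=
  forall N : set T, closed_normal_subgroup mul inv one N ->
    pseudocharacter_le_omega1 (coset_space mul N) ->
    metrizable (coset_space mul N).

Definition separable (T : topologicalType) : Prop :=
  exists2 D : set T, countable D & dense D.

(* the subspace A of T is Lindelof: every cover of A by open sets of T
   (equivalently, by open sets of the subspace) has a countable subcover *)
Definition lindelof_subspace (T : topologicalType) (A : set T) : Prop :=
  forall (I : Type) (U : I -> set T), (forall i, open (U i)) ->
    A `<=` \bigcup_i U i ->
    exists2 J : set I, countable J & A `<=` \bigcup_(i in J) U i.

(* Given an open cover of A, choose for each a in A an open neighbourhood V_a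
   of 1 such that a V_a lies in a member of the cover. Refine each V_a into a
   sequence U_{a,k} of symmetric open neighbourhoods of 1 with
   U_{a,k+1} U_{a,k+1} <= U_{a,k} and e_j U_{a,k+1} e_j^-1 <= U_{a,k} for the
   first k points e_j of a countable dense set. The intersection N of all the
   U_{a,k} is a closed normal subgroup (density of the e_j yields normality),
   and every coset gN is the intersection of the omega_1 open sets g U_{a,k} N,
   so H/N has pseudocharacter at most omega_1 and is therefore metrizable. A
   separable metrizable space is hereditarily Lindelof, so countably many of
   the open sets a U_{a,1} N cover the image of A; as
   a U_{a,1} N <= a U_{a,0} = a V_a, countably many members of the cover
   cover A. *)

From mathcomp Require Import all_boot all_order all_algebra.
From mathcomp Require Import all_classical all_reals all_analysis.
From Stdlib Require Import Reals Lra.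

Local Open Scope classical_set_scope.

Lemma countable_setU T (A B : set T) :
  countable A -> countable B -> countable (A `|` B).
Proof.
move=> cA cB.
have -> : A `|` B = \bigcup_(b in [set: bool]) (if b then A else B).
  by apply/seteqP; split=> [x [Ax|Bx]|x [[] _]]; by [exists true|exists false|left|right].
by apply: bigcup_countable => // -[].
Qed.

Lemma dense_sequence (T : topologicalType) (t0 : T) : separable T ->
  exists e : nat -> T, forall W, open W -> W !=set0 -> exists j, W (e j).
Proof.
move=> [D /pfcard_geP[->|[e]] dD].
  by exists (fun=> t0) => W oW /dD/(_ oW) [x []].
exists e => W oW /dD/(_ oW) [x [Wx Dx]].
by have [j _ ejx] := 'surj_e Dx; exists j; rewrite ejx.
Qed.

Lemma card_le_omega1_set0 (X : Type) : card_le_omega1 (@set0 X).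
Proof.
exists (fun _ _ => False); do !split=> //.
by move=> B BS /(subset_nonempty BS) [].
Qed.

Lemma card_le_omega1_inj (X Y : Type) (A : set X) (B : set Y) (g : Y -> X) :
  (forall b, B b -> A (g b)) -> {in B &, injective g} ->
  card_le_omega1 A -> card_le_omega1 B.
Proof.
move=> gBA ginj [r [irr [tr [tot [mn seg]]]]].
exists (fun b1 b2 => r (g b1) (g b2)); split; [|split; [|split; [|split]]].
- by move=> b Bb; exact/irr/gBA.
- by move=> a b c Ba Bb Bc; apply: tr; exact: gBA.
- move=> a b Ba Bb; case: (tot _ _ (gBA _ Ba) (gBA _ Bb)) => [e|]; last by right.
  by left; apply: ginj; rewrite ?inE.
- move=> C CB [c Cc]; have [||_ [b Cb <-] gmin] := mn (g @` C).
  + by move=> _ [b Cb <-]; exact/gBA/CB.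
  + by exists (g c), c.
  + by exists b => // b' Cb'; apply: gmin; exists b'.
- move=> b Bb; have /countable_injP[f finj] := seg _ (gBA _ Bb).
  apply/countable_injP; exists (f \o g) => b1 b2 /[!inE] -[Bb1 r1] [Bb2 r2] /finj e.
  by apply: ginj; rewrite ?inE //; apply: e; rewrite inE; split => //; exact: gBA.
Qed.

Lemma card_le_omega1_image (X Y : Type) (f : X -> Y) (S : set X) :
  card_le_omega1 S -> card_le_omega1 (f @` S).
Proof.
move=> cS; have [[x0 _]|S0] := pselect (S !=set0); last first.
  have -> : S = set0 by apply/seteqP; split=> // x Sx; apply: S0; exists x.
  by rewrite image_set0; exact: card_le_omega1_set0.
have [g gP] : {g : Y -> X & forall y, (f @` S) y -> S (g y) /\ f (g y) = y}.
  apply: (@choice _ _ (fun y x => (f @` S) y -> S x /\ f x = y)) => y.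
  have [[x Sx <-]|nSy] := pselect ((f @` S) y); first by exists x.
  by exists x0 => /nSy.
apply: (@card_le_omega1_inj _ _ _ _ g _ _ cS) => [y /gP[]//|y1 y2].
by rewrite !inE => /gP[_ e1] /gP[_ e2] e; rewrite -e1 -e2 e.
Qed.

Lemma card_le_omega1_setXnat (X : Type) (S : set X) :
  card_le_omega1 S -> card_le_omega1 (S `*` [set: nat]).
Proof.
move=> [r [irr [tr [tot [mn seg]]]]].
pose lex (p q : X * nat) := r p.1 q.1 \/ p.1 = q.1 /\ (p.2 < q.2)%N.
exists lex; split; [|split; [|split; [|split]]].
- by move=> [a n] [/= Sa _] [/irr|[_ /[!ltnn]]].
- move=> [a n] [b m] [c k] [/= Sa _] [/= Sb _] [/= Sc _].
  rewrite /lex /= => -[rab|[<- nm]] [rbc|[<- mk]].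
  + by left; exact: tr rbc.
  + by left.
  + by left.
  + by right; split=> //; exact: ltn_trans mk.
- move=> [a n] [b m] [/= Sa _] [/= Sb _]; rewrite /lex /=.
  have [<-|[rab|rba]] := tot a b Sa Sb; [|by right; left; left|by right; right; left].
  by case: (ltngtP n m) => [lt|gt|->]; [right; left; right|right; right; right|left].
- move=> B BS [[a0 n0] B0].
  have [||a [[b m] Bbm <-] amin] := mn (fst @` B).
  + by move=> _ [p /BS[Sp _] <-].
  + by exists a0, (a0, n0).
  have exn : exists n, `[< B (b, n) >] by exists m; exact/asboolP.
  exists (b, ex_minn exn); first by case: ex_minnP => n /asboolP.
  move=> [c k] Bck; rewrite /lex /= => -[rcb|[ecb]].
  + by apply: (amin c) => //; exists (c, k).
  + rewrite {}ecb in Bck; case: ex_minnP => n _ /(_ k (asboolT Bck)).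
    by rewrite leqNgt => /negP.
- move=> [a n] [/= Sa _].
  apply: (@sub_countable _ _ _ (([set b | S b /\ r b a] `|` [set a]) `*` [set: nat])).
    apply: subset_card_le => -[b m] [[/= Sb _]] [rba|[/= ba _]].
    + by split=> //; left.
    + by split=> //; right.
  by apply: countableX => //; apply: countable_setU; [exact: seg|exact: countable1].
Qed.

Lemma open_preimage (T U : topologicalType) (f : T -> U) (D : set U) :
  continuous f -> open D -> open (f @^-1` D).
Proof. by move=> cf; apply: open_comp => x _; exact: cf. Qed.

(* Countably many balls [B(x, 1/(m+1))], [x] in a countable dense set, form a
   base; for each such ball that fits in some [O i], one such [i] is chosen. *)
Lemma metrizable_separable_hereditarily_lindelof (Z : topologicalType) :
  metrizable Z -> separable Z ->
  forall (I : Type) (P : set I) (O : I -> set Z), (forall i, P i -> open (O i)) ->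
  exists2 J : set I, countable J &
    J `<=` P /\ \bigcup_(i in P) O i `<=` \bigcup_(i in J) O i.
Proof.
move=> [d [_ d_eq0 d_sym d_tri d_open]] [D cD dD] I P O oO.
have [[i0 Pi0]|P0] := pselect (P !=set0); last first.
  by exists set0 => //; split=> // z [i Pi _]; case: P0; exists i.
pose ball x r := [set y | Rlt (d x y) r].
have ball_open x r : open (ball x r).
  apply/d_open => y xy; exists (r - d x y)%R; first by rewrite /ball /= in xy; lra.
  by move=> z /= yz; have := d_tri x y z; rewrite /ball /= in xy *; lra.
pose rad m := Rinv (INR m.+1).
pose fits (p : Z * nat) i := P i /\ ball p.1 (rad p.2) `<=` O i.
have [ch chP] : {ch : Z * nat -> I & forall p, (exists i, fits p i) -> fits p (ch p)}.
  apply: (@choice _ _ (fun p i => (exists j, fits p j) -> fits p i)) => p.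
  have [[i fi]|nf] := pselect (exists i, fits p i); first by exists i.
  by exists i0 => /nf.
exists (ch @` [set p | D p.1 /\ exists i, fits p i]).
  apply: (sub_countable (card_image_le _ _)).
  apply: (@sub_countable _ _ _ (D `*` [set: nat])); last exact: countableX.
  by apply: subset_card_le => p [].
split; first by move=> _ [p [_ /chP[Pch _]] <-].
move=> z [i Pi Oiz].
have [eps eps0 epsO] := (d_open (O i)).1 (oO i Pi) z Oiz.
have [M [Meps M0]] := archimed_cor1 (eps / 2) ltac:(lra).
have radM : rad M.-1 = Rinv (INR M) by rewrite /rad prednK //; exact/ltP.
have [x [zx Dx]] : (ball z (rad M.-1) `&` D) !=set0.
  apply: dD (ball_open _ _); exists z; rewrite /ball /= (proj2 (d_eq0 z z) erefl).
  by apply: Rinv_0_lt_compat; apply: lt_0_INR; exact/ltP.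
have fit : fits (x, M.-1) i.
  split=> // y xy; apply: epsO; rewrite /ball /= radM in zx xy *.
  by have := d_tri z x y; lra.
have [_ chO] := chP (x, M.-1) (ex_intro _ i fit).
exists (ch (x, M.-1)); first by exists (x, M.-1) => //; split=> //; exists i.
by apply: chO; rewrite /ball /= d_sym.
Qed.

Definition translate {T : Type} (mul : T -> T -> T) (inv : T -> T) (g : T) (W : set T)
  : set T := [set y | W (mul (inv g) y)].

Section TopologicalGroup.
Context {H : topologicalType} {mul : H -> H -> H} {inv : H -> H} {one : H}.
Hypothesis TG : topological_group mul inv one.
Local Notation "x * y" := (mul x y).

Lemma tg_mulgA x y z : x * (y * z) = x * y * z. Proof. by case: TG. Qed.
Lemma tg_mul1g x : one * x = x. Proof. by case: TG. Qed.
Lemma tg_mulVg x : inv x * x = one. Proof. by case: TG. Qed.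

Lemma tg_mulgV x : x * inv x = one.
Proof.
rewrite -[x * inv x]tg_mul1g -{1}(tg_mulVg (inv x)) -tg_mulgA.
by rewrite (tg_mulgA (inv x) x) tg_mulVg tg_mul1g tg_mulVg.
Qed.

Lemma tg_mulg1 x : x * one = x.
Proof. by rewrite -(tg_mulVg x) tg_mulgA tg_mulgV tg_mul1g. Qed.

Lemma tg_mulKg x y : inv x * (x * y) = y.
Proof. by rewrite tg_mulgA tg_mulVg tg_mul1g. Qed.

Lemma tg_mulKVg x y : x * (inv x * y) = y.
Proof. by rewrite tg_mulgA tg_mulgV tg_mul1g. Qed.

Lemma tg_mulgKV x y : y * inv x * x = y.
Proof. by rewrite -tg_mulgA tg_mulVg tg_mulg1. Qed.

Lemma tg_invgK x : inv (inv x) = x.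
Proof. by rewrite -[inv (inv x)]tg_mulg1 -(tg_mulVg x) tg_mulKg. Qed.

Lemma tg_invgM x y : inv (x * y) = inv y * inv x.
Proof.
rewrite -[RHS]tg_mulg1 -(tg_mulgV (x * y)) tg_mulgA -(tg_mulgA (inv y)) tg_mulKg.
by rewrite tg_mulVg tg_mul1g.
Qed.

Lemma tg_invg1 : inv one = one. Proof. by rewrite -[inv one]tg_mul1g tg_mulgV. Qed.

Lemma tg_mul_continuous : continuous (fun p : H * H => p.1 * p.2).
Proof. by case: TG. Qed.

Lemma tg_inv_continuous : continuous inv. Proof. by case: TG. Qed.

Lemma tg_lmul_continuous c : continuous (fun x => c * x).
Proof.
move=> x; apply: (continuous_comp (f := fun x => (c, x)) _ (tg_mul_continuous (c, x))).
exact: cvg_pair (cvg_cst _) cvg_id.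
Qed.

Lemma tg_rmul_continuous c : continuous (fun x => x * c).
Proof.
move=> x; apply: (continuous_comp (f := fun x => (x, c)) _ (tg_mul_continuous (x, c))).
exact: cvg_pair cvg_id (cvg_cst _).
Qed.

Lemma tg_conj_continuous c : continuous (fun x => c * x * inv c).
Proof.
move=> x; exact: (continuous_comp (tg_lmul_continuous c x) (tg_rmul_continuous _ _)).
Qed.

Local Notation translate := (translate mul inv).

Lemma open_translate g W : open W -> open (translate g W).
Proof. exact/open_preimage/tg_lmul_continuous. Qed.

Lemma translate_center g W : W one -> translate g W g.
Proof. by rewrite /translate /= tg_mulVg. Qed.

Section Quotient.
Context {N : set H}.
Hypotheses (N1 : N one) (NM : forall x y, N x -> N y -> N (x * y))
  (NV : forall x, N x -> N (inv x)).
Local Notation pi := (coset_proj mul N).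

Lemma coset_proj_eqP g h : pi g = pi h <-> N (inv g * h).
Proof.
split=> [/(congr1 sval) /= egh|Ngh].
  have : lcoset mul h N h by exists one => //; rewrite tg_mulg1.
  by rewrite -egh => -[n Nn <-]; rewrite tg_mulKg.
have egh : lcoset mul g N = lcoset mul h N.
  apply/seteqP; split=> _ [n Nn <-].
  - exists (inv (inv g * h) * n); first by apply: NM => //; exact: NV.
    by rewrite tg_invgM tg_invgK tg_mulgA tg_mulKVg.
  - by exists (inv g * h * n); [exact: NM|rewrite tg_mulgA tg_mulKVg].
rewrite /coset_proj; move: (ex_intro _ g _) (ex_intro _ h _); rewrite egh => p q.
by congr exist.
Qed.

Lemma coset_proj_surj (z : coset_space mul N) : exists g, z = pi g.
Proof. by case: z => S [g eS]; exists g; subst S; congr exist. Qed.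

Lemma coset_proj_imageP S x : (pi @` S) (pi x) <-> exists2 s, S s & N (inv s * x).
Proof.
by split=> [[s Ss /coset_proj_eqP]|[s Ss /coset_proj_eqP]]; exists s.
Qed.

Lemma open_coset_proj_image S : open S -> open (pi @` S).
Proof.
move=> oS; change (open (pi @^-1` (pi @` S))).
have -> : pi @^-1` (pi @` S) = \bigcup_(n in N) [set x | S (x * inv n)].
  apply/seteqP; split=> x /=.
  - move=> /coset_proj_imageP[s Ss Nsx]; exists (inv s * x) => //=.
    by rewrite tg_invgM tg_invgK tg_mulgA tg_mulgV tg_mul1g.
  - move=> [n Nn /= Sxn]; apply/coset_proj_imageP; exists (x * inv n) => //.
    by rewrite tg_invgM tg_invgK tg_mulgKV.
by apply: bigcup_open => n _; apply: open_preimage => //; exact: tg_rmul_continuous.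
Qed.

Lemma separable_coset_space : separable H -> separable (coset_space mul N).
Proof.
move=> [D cD dD]; exists (pi @` D); first exact: sub_countable (card_image_le _ _) cD.
move=> W [z Wz] oW; have [g zg] := coset_proj_surj z.
have [h [Wh Dh]] : (pi @^-1` W `&` D) !=set0.
  by apply: dD oW; exists g; rewrite /preimage /= -zg.
by exists (pi h); split=> //; exists h.
Qed.

End Quotient.

Section Refinement.
Variable e : nat -> H.

Definition refines (k : nat) (V W : set H) : Prop :=
  [/\ open W, W one, (forall x, W x -> W (inv x)),
      (forall x y, W x -> W y -> V (x * y)) &
      (forall j x, (j <= k)%N -> W x -> V (e j * x * inv (e j)))].

Lemma exists_refines k V : open V -> V one -> exists W, refines k V W.
Proof.
move=> oV V1; have nV : nbhs one V by apply: open_nbhs_nbhs.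
have [[P Q] [/= nP nQ] PQV] : \forall p \near (one, one), V (p.1 * p.2).
  by apply: tg_mul_continuous; rewrite /= tg_mul1g.
have nconj : \forall x \near one, forall j : 'I_k.+1, V (e j * x * inv (e j)).
  apply: filter_forall => j; apply: tg_conj_continuous.
  by rewrite /= tg_mulg1 tg_mulgV.
pose W0 : set H := [set x | [/\ P x, Q x & forall j : 'I_k.+1, V (e j * x * inv (e j))]]°.
have oW0 : open W0 by exact: open_interior.
have W01 : W0 one.
  apply: nbhs_singleton; apply: nbhs_interior.
  by apply: filterS (filterI nP (filterI nQ nconj)) => x [? []].
have W0P x : W0 x -> [/\ P x, Q x & forall j : 'I_k.+1, V (e j * x * inv (e j))].
  exact: interior_subset.
exists (W0 `&` inv @^-1` W0); rewrite /refines; split.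
- by apply: openI => //; apply: open_preimage => //; exact: tg_inv_continuous.
- by split=> //=; rewrite tg_invg1.
- by move=> x [W0x W0ix]; split=> //=; rewrite tg_invgK.
- by move=> x y [/W0P[Px _ _] _] [/W0P[_ Qy _] _]; exact: (PQV (x, y)).
- by move=> j x jk [/W0P[_ _ /(_ (Ordinal (jk : (j < k.+1)%N)))]].
Qed.

Definition refining_seq (U : nat -> set H) : Prop :=
  [/\ open (U 0), U 0 one & forall k, refines k (U k) (U k.+1)].

Lemma exists_refining_seq V : open V -> V one ->
  exists U, U 0 = V /\ refining_seq U.
Proof.
move=> oV V1.
have [f fP] : {f : nat * set H -> set H &
    forall kW, open kW.2 -> kW.2 one -> refines kW.1 kW.2 (f kW)}.
  apply: (@choice _ _ (fun kW W => open kW.2 -> kW.2 one -> refines kW.1 kW.2 W)).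
  move=> [k W]; have [[oW W1]|nW] := pselect (open W /\ W one).
    by have [W' hW'] := exists_refines k W oW W1; exists W'.
  by exists W => oW W1; case: nW.
pose fix U k := if k is k'.+1 then f (k', U k') else V.
have UP k : [/\ open (U k), U k one & refines k (U k) (U k.+1)].
  elim: k => [|k [_ _ hk]]; first by split=> //; exact: fP.
  by case: hk => oW W1 _ _ _; split=> //; exact: fP.
by exists U; split=> //; split=> // k; case: (UP k).
Qed.

Section RefiningSeq.
Context {U : nat -> set H}.
Hypothesis hU : refining_seq U.

Lemma refining_open k : open (U k).
Proof. by case: hU; case: k => [//|k] _ _ /(_ k)[]. Qed.

Lemma refining_one k : U k one.
Proof. by case: hU; case: k => [//|k] _ _ /(_ k)[]. Qed.

Lemma refining_inv {k x} : U k.+1 x -> U k.+1 (inv x).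
Proof. by case: hU => _ _ /(_ k)[_ _ + _ _]; apply. Qed.

Lemma refining_mul {k x y} : U k.+1 x -> U k.+1 y -> U k (x * y).
Proof. by case: hU => _ _ /(_ k)[_ _ _ + _]; apply. Qed.

Lemma refining_conj {j k x} : (j <= k)%N -> U k.+1 x -> U k (e j * x * inv (e j)).
Proof. by case: hU => _ _ /(_ k)[_ _ _ _ +]; apply. Qed.

Lemma refining_succ {k x} : U k.+1 x -> U k x.
Proof. by move=> Ux; rewrite -[x]tg_mulg1; apply: refining_mul => //; exact: refining_one. Qed.

Lemma refining_mono {k l x} : (k <= l)%N -> U l x -> U k x.
Proof.
move=> /subnK <-; elim: (l - k)%N => [//|m IH].
by rewrite addSn => /refining_succ; exact: IH.
Qed.

End RefiningSeq.

Lemma exists_refining_family (I : Type) (A : set I) (V : I -> set H) :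
  (forall i, A i -> open (V i) /\ V i one) ->
  exists U : I -> nat -> set H, forall i, refining_seq (U i) /\ (A i -> U i 0 = V i).
Proof.
move=> oV; suff [U hU] : {U : I -> nat -> set H & forall i,
    refining_seq (U i) /\ (A i -> U i 0 = V i)} by exists U.
apply: (choice (P := fun i U => refining_seq U /\ (A i -> U 0 = V i))) => i.
have [/oV[oVi Vi1]|nAi] := pselect (A i).
  by have [U [U0 hU]] := exists_refining_seq _ oVi Vi1; exists U.
by have [U [_ hU]] := exists_refining_seq _ openT Logic.I; exists U; split=> // /nAi.
Qed.

Section Core.
Variables (I : Type) (A : set I) (U : I -> nat -> set H).
Hypothesis hU : forall i, refining_seq (U i).

Definition core : set H := [set x | forall i, A i -> forall k, U i k x].
Local Notation pi := (coset_proj mul core).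

Lemma core_one : core one.
Proof. by move=> i _ k; exact: refining_one. Qed.

Lemma core_mul x y : core x -> core y -> core (x * y).
Proof. by move=> Nx Ny i Ai k; apply: refining_mul; [exact: hU|exact: Nx|exact: Ny]. Qed.

Lemma core_inv x : core x -> core (inv x).
Proof.
by move=> Nx i Ai k; apply: (refining_succ (hU i)); apply: refining_inv; [exact: hU|exact: Nx].
Qed.

Lemma core_closed : closed core.
Proof.
rewrite closure_id; apply/seteqP; split; first exact: subset_closure.
move=> x cx i Ai k.
have Wx : open_nbhs x (translate x (U i k.+1)).
  split; first by apply: open_translate; exact: (refining_open (hU i) _).
  by apply: translate_center; exact: (refining_one (hU i) _).
have [y [Ny xy]] := cx _ (open_nbhs_nbhs Wx).
have := refining_mul (hU i) (Ny i Ai k.+1) (refining_inv (hU i) xy).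
by rewrite tg_invgM tg_invgK tg_mulKVg.
Qed.

Hypothesis e_dense : forall W, open W -> W !=set0 -> exists j, W (e j).

(* Approximate [g] by some [e j]: conjugation by [g] is conjugation by [e j],
   which the sequences control, corrected by a small factor [e j * inv g]. *)
Lemma core_normal g x : core x -> core (g * x * inv g).
Proof.
move=> Nx i Ai n; have hUi := hU i.
have [j /= wU] : exists j, ((fun y => y * inv g) @^-1` U i n.+2) (e j).
  apply: e_dense; first exact: open_preimage (tg_rmul_continuous _) (refining_open hUi _).
  by exists g; rewrite /preimage /= tg_mulgV; exact: (refining_one hUi).
set w := e j * inv g in wU.
have conjU : U i n.+2 (e j * x * inv (e j)).
  apply: (refining_mono hUi (leq_maxr j n.+2)).
  by apply: (refining_conj hUi (leq_maxl j n.+2)); exact: Nx.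
have -> : g * x * inv g = inv w * (e j * x * inv (e j) * w).
  by rewrite /w tg_invgM tg_invgK !tg_mulgA !tg_mulgKV.
apply: (refining_mul hUi); first exact: (refining_succ hUi (refining_inv hUi wU)).
exact: (refining_mul hUi).
Qed.

Lemma core_closed_normal : closed_normal_subgroup mul inv one core.
Proof.
split; [exact: core_one|exact: core_mul|exact: core_inv|exact: core_normal|].
exact: core_closed.
Qed.

Lemma open_core_image g i k : open (pi @` translate g (U i k)).
Proof.
apply: (open_coset_proj_image core_one core_mul core_inv).
by apply: open_translate; exact: (refining_open (hU i) _).
Qed.

Lemma translate_core_image {g i k x} : A i ->
  (pi @` translate g (U i k.+1)) (pi x) -> translate g (U i k) x.
Proof.
move=> Ai /(coset_proj_imageP core_one core_mul core_inv)[s gs Nsx].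
by have := refining_mul (hU i) gs (Nsx i Ai k.+1); rewrite -tg_mulgA tg_mulKVg.
Qed.

Lemma pseudocharacter_core :
  card_le_omega1 A -> pseudocharacter_le_omega1 (coset_space mul core).
Proof.
move=> cA z; have [g ->] := coset_proj_surj z.
have translate_g ik : (pi @` translate g (U ik.1 ik.2)) (pi g).
  by exists g => //; apply: translate_center; exact: (refining_one (hU _) _).
exists ((fun ik => pi @` translate g (U ik.1 ik.2)) @` (A `*` [set: nat])); split.
- exact/card_le_omega1_image/card_le_omega1_setXnat.
- by move=> _ [ik _ <-]; split; [exact: open_core_image|exact: translate_g].
- apply/seteqP; split=> [w Fw|_ -> _ [ik _ <-] //].
  have [x wx] := coset_proj_surj w; subst w.
  apply/esym/(coset_proj_eqP core_one core_mul core_inv) => i Ai k.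
  by apply: (translate_core_image Ai); apply: Fw; exists (i, k.+1).
Qed.

End Core.

End Refinement.

Lemma omega1_collapsible_translates_cover (A : set H) (V : H -> set H) :
  separable H -> omega1_collapsible mul inv one -> card_le_omega1 A ->
  (forall a, A a -> open (V a) /\ V a one) ->
  exists2 J : set H, countable J & J `<=` A /\ A `<=` \bigcup_(b in J) translate b (V b).
Proof.
move=> sepH coll cA oV.
have [e e_dense] := dense_sequence _ one sepH.
have [U hU] := exists_refining_family e _ _ _ oV.
have hUa a : refining_seq e (U a) by case: (hU a).
pose pi := coset_proj mul (core _ A U).
have metr := coll _ (core_closed_normal _ _ _ _ hUa e_dense)
  (pseudocharacter_core _ _ _ _ hUa cA).
pose O a := pi @` translate a (U a 1).
have [J cJ [JA coverJ]] := metrizable_separable_hereditarily_lindelof _ metr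
  (separable_coset_space sepH) _ A O (fun a _ => open_core_image _ _ _ _ hUa a a 1).
exists J => //; split=> // a Aa.
have [b Jb Oba] : (\bigcup_(b in J) O b) (pi a).
  apply: coverJ; exists a => //; exists a => //.
  by apply: translate_center; exact: (refining_one e (hUa a) 1).
exists b => //; rewrite -(proj2 (hU b) (JA b Jb)).
exact: (translate_core_image _ _ _ _ hUa (JA b Jb) Oba).
Qed.

End TopologicalGroup.

Theorem lemma17 (H : topologicalType)
  (mul : H -> H -> H) (inv : H -> H) (one : H) :
  topological_group mul inv one ->
  hausdorff_space H -> regular_space H ->
  separable H ->
  omega1_collapsible mul inv one ->
  forall A : set H, card_le_omega1 A -> lindelof_subspace A.
Proof.
move=> TG _ _ sepH coll A cA I W oW coverA.
have [[a0 Aa0]|A0] := pselect (A !=set0); last first.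
  by exists set0 => // a Aa; case: A0; exists a.
have [idx idxP] : {idx : H -> I & forall a, A a -> W (idx a) a}.
  apply: (choice (P := fun a i => A a -> W i a)) => a.
  have [/coverA[i _ Wia]|nAa] := pselect (A a); first by exists i.
  by have [i _ _] := coverA a0 Aa0; exists i.
pose V a := (fun y => mul a y) @^-1` W (idx a).
have [|J cJ [JA coverJ]] := omega1_collapsible_translates_cover TG A V sepH coll cA.
  move=> a Aa; split; first exact: open_preimage (tg_lmul_continuous TG a) (oW _).
  by rewrite /V /preimage /= (tg_mulg1 TG); exact: idxP.
exists (idx @` J); first exact: sub_countable (card_image_le _ _) cJ.
move=> a /coverJ[b Jb]; rewrite /translate /V /preimage /= (tg_mulKVg TG) => Wa.
by exists (idx b) => //; exists b.
Qed.
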